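(* The problems ISPNEW, ISOP and ISUP are pairwise equivalent: every instance of one can be formulated as an instance of another on the same graph so that an optimal solution of the new instance is an optimal solution of the original instance.
   Context: Let $G=(V,E)$ be a graph with vertex weights $c_i\in\mathbb{R}$ and edge weights $q^0_{ij},q^1_{ij}\in\mathbb{R}$. An independent set is a set $P\subseteq V$ containing no edge. For $P\subseteq V$ let $E_0(P)$ be the edges with no endpoint in $P$ and $E_1(P)$ the edges with exactly one endpoint in $P$. The independent set problem with node and edge weights (ISPNEW) is to find an independent set $P$ maximizing $\sum_{i\in P}c_i+\sum_{(i,j)\in E_0(P)}q^0_{ij}+\sum_{(i,j)\in E_1(P)}q^1_{ij}$. ISOP is the special case $q^1_{ij}=0$ for all edges; ISUP is the special case $q^0_{ij}=0$ for all edges. *)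

From HB Require Import structures.
From mathcomp Require Import all_boot all_order all_algebra.
Set Implicit Arguments. Unset Strict Implicit. Unset Printing Implicit Defensive.
Import Order.TTheory GRing.Theory Num.Theory.
Local Open Scope ring_scope.

Definition simple_graph (T : finType) (E : {set {set T}}) : Prop :=
  forall f, f \in E -> #|f| = 2%N.

(* An instance of ISPNEW on the graph: vertex weights c, edge weights q0, q1
   (edge weights are functions on edges, i.e. on 2-element vertex sets). *)
Record instance (R : realFieldType) (T : finType) := Instance {
  cw : T -> R;
  q0 : {set T} -> R;
  q1 : {set T} -> R }.

Definition independent (T : finType) (E : {set {set T}}) (P : {set T}) : bool :=
  [forall f in E, ~~ (f \subset P)].

Definition objective (R : realFieldType) (T : finType) (E : {set {set T}})
    (I : instance R T) (P : {set T}) : R :=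
  \sum_(i in P) cw I i
  + \sum_(f in E | #|f :&: P| == 0%N) q0 I f
  + \sum_(f in E | #|f :&: P| == 1%N) q1 I f.

Definition optimal (R : realFieldType) (T : finType) (E : {set {set T}})
    (I : instance R T) (P : {set T}) : Prop :=
  independent E P /\
  forall Q : {set T}, independent E Q -> objective E I Q <= objective E I P.

Inductive problem := ISPNEW | ISOP | ISUP.

Definition in_problem (R : realFieldType) (T : finType) (E : {set {set T}})
    (p : problem) (I : instance R T) : Prop :=
  match p with
  | ISPNEW => True
  | ISOP => forall f, f \in E -> q1 I f = 0
  | ISUP => forall f, f \in E -> q0 I f = 0
  end.

From HB Require Import structures.
From mathcomp Require Import all_boot all_order all_algebra.
Import Order.TTheory GRing.Theory Num.Theory.
Local Open Scope ring_scope.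

(* On an independent set every edge has at most one endpoint in P, so the
   contribution of an edge f is q0 f + (q1 f - q0 f) * |f ∩ P|, which is
   linear in P.  Charging q1 f - q0 f to both endpoints of f turns any
   ISPNEW instance into a vertex-weighted one with zero edge weights, which
   belongs to all three problems and whose objective differs from the
   original one by the constant sum of the q0 f on independent sets. *)

Lemma card_edge_meet_independent {T : finType} {E : {set {set T}}}
    {P : {set T}} {f : {set T}} :
  simple_graph E -> independent E P -> f \in E -> (#|f :&: P| <= 1)%N.
Proof.
move=> HE /forallP indP fE; rewrite leqNgt; apply/negP => two_in_P.
have fIP_eq_f : f :&: P = f by apply/eqP; rewrite eqEcard subsetIl HE.
by move: (indP f); rewrite fE -fIP_eq_f subsetIr.
Qed.

Lemma sum_incident (V : nmodType) (T : finType) (E : {set {set T}})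
    (P : {set T}) (w : {set T} -> V) :
  \sum_(i in P) \sum_(f in E | i \in f) w f = \sum_(f in E) w f *+ #|f :&: P|.
Proof.
under eq_bigr do rewrite big_mkcondr /=.
rewrite exchange_big /=; apply: eq_bigr => f _.
rewrite -sumr_const big_mkcond [RHS]big_mkcond /=.
by apply: eq_bigr => i _; rewrite in_setI; case: (i \in P); case: (i \in f).
Qed.

Section Linearization.

Context {R : realFieldType} {T : finType} (E : {set {set T}}).
Hypothesis HE : simple_graph E.

Definition linearize (I : instance R T) : instance R T :=
  Instance (fun i => cw I i + \sum_(f in E | i \in f) (q1 I f - q0 I f))
           (fun=> 0) (fun=> 0).

Lemma in_problem_linearize (p : problem) (I : instance R T) :
  in_problem E p (linearize I).
Proof. by case: p. Qed.

Lemma objective_linearize (I : instance R T) (P : {set T}) :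
  independent E P ->
  objective E (linearize I) P = objective E I P - \sum_(f in E) q0 I f.
Proof.
move=> indP; rewrite /objective /= !big1_eq !addr0 big_split /= sum_incident.
rewrite -!addrA; congr (_ + _).
rewrite [\sum_(f in E | _) q0 I f]big_mkcondr [\sum_(f in E | _) q1 I f]big_mkcondr.
rewrite /= -sumrB -big_split /=; apply: eq_bigr => f fE.
move: (card_edge_meet_independent HE indP fE).
case: #|f :&: P| => [|[|]] //= _.
- by rewrite mulr0n sub0r subrr.
- by rewrite mulr1n add0r.
Qed.

End Linearization.

Lemma optimal_shift (R : realFieldType) (T : finType) (E : {set {set T}})
    (I J : instance R T) (K : R) :
  (forall P, independent E P -> objective E J P = objective E I P + K) ->
  forall P, optimal E J P -> optimal E I P.
Proof.
move=> shift P [indP optP]; split=> // Q indQ.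
by rewrite -(lerD2r K) -!shift // optP.
Qed.

Theorem theorem8 (R : realFieldType) (T : finType) (E : {set {set T}})
    (HE : simple_graph E) (X Y : problem) (I : instance R T) :
  in_problem E X I ->
  exists J : instance R T,
    [/\ in_problem E Y J,
        (exists K : R, forall P : {set T}, independent E P ->
            objective E J P = objective E I P + K)
      & forall P : {set T}, optimal E J P -> optimal E I P].
Proof.
move=> _.
have shift P : independent E P ->
    objective E (linearize E I) P = objective E I P + - \sum_(f in E) q0 I f.
  exact: objective_linearize.
exists (linearize E I); split; first exact: in_problem_linearize.
- by exists (- \sum_(f in E) q0 I f).
- exact: optimal_shift shift.
Qed.
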